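(* Let $P=\{(u_1,v_1),\ldots,(u_n,v_n)\}\subseteq\{a,b\}^*\times\{a,b\}^*$ with $n\ge3$ have no solution as an instance of Restricted PCP, and let $W=W_0\cup\cdots\cup W_{15}$ be constructed from $P$ as in the context. Then for every cycle $Q$ of $W$, the componentwise product $Q$ in $F(\Gamma)\times F(\Gamma)$ is not equal to $(\varepsilon,\varepsilon)$.
   Context: For a set $H$, $F(H)$ denotes the free group on $H$; $\varepsilon$ is its identity (the empty word), and pairs of elements of free groups are multiplied componentwise. Restricted PCP: given $P=\{(u_1,v_1),\ldots,(u_n,v_n)\}\subseteq\{a,b\}^*\times\{a,b\}^*$ with $n\ge3$, a solution is a finite (possibly empty) sequence $l_1,\ldots,l_k$ with $2\le l_i\le n-1$ such that $u_1u_{l_1}\cdots u_{l_k}u_n=v_1v_{l_1}\cdots v_{l_k}v_n$. Construction of $W$. Let $\Gamma_i=\{a_i,b_i\}$ for $1\le i\le4$ and $\Gamma_B=\{x_1,\ldots,x_8\}$ be pairwise disjoint sets of letters, and $\Gamma=\Gamma_1\cup\Gamma_2\cup\Gamma_3\cup\Gamma_4\cup\Gamma_B$. Let $\delta_i:F(\{a,b\})\to F(\Gamma_i)$ be the homomorphism with $\delta_i(a)=a_i$, $\delta_i(b)=b_i$, and set $u_{ik}=\delta_i(u_k)$, $v_{ik}=\delta_i(v_k)$. For a positive integer $j$ let $\phi_i(j)=a_i^jb_i$ and $\psi_i(j)=(a_i^{-1})^jb_i^{-1}$. Put $x_0:=x_8$. For $p=1,2,3,4$ define $W_{4(p-1)}=\{(x_{2p-2}\,v_{p1}^{-1}u_{p1}\,x_{2p-1}^{-1},\;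 x_{2p-2}\,b_p\,x_{2p-1}^{-1})\}$, $W_{4(p-1)+1}=\{(x_{2p-1}\,u_{pj}\,x_{2p-1}^{-1},\; x_{2p-1}\,\phi_p(j)\,x_{2p-1}^{-1}) : 2\le j\le n-1\}$, $W_{4(p-1)+2}=\{(x_{2p-1}\,u_{pn}v_{pn}^{-1}\,x_{2p}^{-1},\; x_{2p-1}\,b_p^{-1}\,x_{2p}^{-1})\}$, $W_{4(p-1)+3}=\{(x_{2p}\,v_{pj}^{-1}\,x_{2p}^{-1},\; x_{2p}\,\psi_p(j)\,x_{2p}^{-1}) : 2\le j\le n-1\}$, and $W=W_0\cup W_1\cup\cdots\cup W_{15}$. A cycle of $W$ is a product $w_i\,w_{(i+1)\bmod 16}\cdots w_{(i+15)\bmod16}$ for some $0\le i\le15$, where $w_y\in W_y$ (a single pair) when $y$ is even and $w_y$ is a (possibly empty) finite product of pairs from $W_y$ when $y$ is odd. *)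

From mathcomp Require Import all_boot.
Set Implicit Arguments. Unset Strict Implicit. Unset Printing Implicit Defensive.

(* Letters of Gamma are encoded as pairs (kind, index):
   a_i = (0,i), b_i = (1,i), x_k = (2,k). *)
Definition gam := (nat * nat)%type.
(* A signed letter: (g, false) is g, (g, true) is g^{-1}. *)
Definition letter := (gam * bool)%type.
Definition word := seq letter.

Definition linv (x : letter) : letter := (x.1, ~~ x.2).

Fixpoint red (w : word) : word :=
  if w is x :: w' then
    let r := red w' in
    if r is y :: r' then (if y == linv x then r' else x :: r) else [:: x]
  else [::].

(* Elements of the free group are represented by words; the group element of
   a word w is its reduced form red w. The identity epsilon is [::]. *)
Definition fmul (u v : word) : word := red (u ++ v).
Definition finv (w : word) : word := rev (map linv w).
Definition fprod (ws : seq word) : word := foldr fmul [::] ws.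
Definition fgen (g : gam) : word := [:: (g, false)].

Definition a_ (i : nat) : word := fgen (0, i).
Definition b_ (i : nat) : word := fgen (1, i).
Definition x_ (k : nat) : word := fgen (2, if k == 0 then 8 else k).

Inductive ab := ab_a | ab_b.

Section PCP.
Variable P : seq (seq ab * seq ab).
Definition pn := size P.
(* 1-based access: u k = u_k, v k = v_k *)
Definition pu (k : nat) : seq ab := nth [::] (map fst P) k.-1.
Definition pv (k : nat) : seq ab := nth [::] (map snd P) k.-1.

Definition rpcp_solution (l : seq nat) : Prop :=
  all (fun k => (2 <= k) && (k <= pn - 1)) l /\
  pu 1 ++ flatten (map pu l) ++ pu pn = pv 1 ++ flatten (map pv l) ++ pv pn.

Definition delta (i : nat) (w : seq ab) : word :=
  fprod (map (fun c => match c with ab_a => a_ i | ab_b => b_ i end) w).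

Definition phi (i j : nat) : word := fprod (nseq j (a_ i) ++ [:: b_ i]).
Definition psi (i j : nat) : word := fprod (nseq j (finv (a_ i)) ++ [:: finv (b_ i)]).

Definition upj (p j : nat) := delta p (pu j).
Definition vpj (p j : nat) := delta p (pv j).

(* W_y for 0 <= y <= 15, with y = 4(p-1) + r *)
Definition Wset (y : nat) : seq (word * word) :=
  let p := y %/ 4 + 1 in
  match y %% 4 with
  | 0 => [:: (fprod [:: x_ (2*p-2); finv (vpj p 1); upj p 1; finv (x_ (2*p-1))],
              fprod [:: x_ (2*p-2); b_ p; finv (x_ (2*p-1))])]
  | 1 => [seq (fprod [:: x_ (2*p-1); upj p j; finv (x_ (2*p-1))],
               fprod [:: x_ (2*p-1); phi p j; finv (x_ (2*p-1))]) | j <- iota 2 (pn - 2)]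
  | 2 => [:: (fprod [:: x_ (2*p-1); upj p pn; finv (vpj p pn); finv (x_ (2*p))],
              fprod [:: x_ (2*p-1); finv (b_ p); finv (x_ (2*p))])]
  | _ => [seq (fprod [:: x_ (2*p); finv (vpj p j); finv (x_ (2*p))],
               fprod [:: x_ (2*p); psi p j; finv (x_ (2*p))]) | j <- iota 2 (pn - 2)]
  end.

Definition pairprod (ws : seq (word * word)) : word * word :=
  (fprod (map fst ws), fprod (map snd ws)).

Definition is_cycle (Q : word * word) : Prop :=
  exists (i : nat) (ws : nat -> seq (word * word)),
    i < 16 /\
    (forall y, y < 16 -> all (fun w => w \in Wset y) (ws y) /\
                        (~~ odd y -> size (ws y) = 1)) /\
    Q = pairprod [seq pairprod (ws ((i + k) %% 16)) | k <- iota 0 16].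
End PCP.

(* Erasing every letter other than a_1, b_1 and reducing is a
   homomorphism F(Gamma) -> F(Gamma_1); it kills the x_k and all W_y with
   y >= 4.  A cycle of W is a conjugate (cyclic shift) of the cycle starting
   at W_0, so if some cycle is trivial then both components of the cycle
   W_0 W_1 ... W_15 project trivially.  Let j_1..j_m and k_1..k_r be the
   indices of the factors chosen from W_1 and W_3.  The second component
   projects to b (a^j_1 b ... a^j_m b) b^-1 (b a^k_1)^-1 ... (b a^k_r)^-1,
   which is trivial only if (k) is (j) reversed, since the code j |-> a^j b
   is uniquely decodable.  The first component then projects to a conjugate
   of u_1 u_j_1 ... u_j_m u_n (v_1 v_j_1 ... v_j_m v_n)^-1 (over a_1, b_1), so
   j_1..j_m is a solution of P. *)

From Pilot Require Import Defs.
From mathcomp Require Import all_boot zify.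
(* Re-import so that [fprod] denotes the free-group product of Defs, not
   the finite product of finfun. *)
Import Defs.
Set Implicit Arguments. Unset Strict Implicit. Unset Printing Implicit Defensive.

Definition push (x : letter) (r : word) : word :=
  if r is y :: r' then (if y == linv x then r' else x :: r) else [:: x].

Lemma red_cons x w : red (x :: w) = push x (red w).
Proof. by []. Qed.
Arguments red : simpl never.

Lemma linvK : involutive linv.
Proof. by case=> g b; rewrite /linv /= negbK. Qed.

Fixpoint reduced (w : word) : bool :=
  if w is x :: w' then
    (if w' is y :: _ then y != linv x else true) && reduced w'
  else true.

Lemma reduced_push x r : reduced r -> reduced (push x r).
Proof.
case: r => [|y r] //= /andP [y_x red_r].
by case: ifP => [_|/negbT x_y] //=; rewrite x_y y_x red_r.
Qed.

Lemma reduced_red w : reduced (red w).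
Proof. by elim: w => [|x w IH] //; rewrite red_cons reduced_push. Qed.

Lemma red_reduced w : reduced w -> red w = w.
Proof.
elim: w => [|x w IH] // /andP [w_x red_w]; rewrite red_cons IH //.
by case: w w_x {IH red_w} => [|y w] //= /negbTE ->.
Qed.

Lemma redK w : red (red w) = red w.
Proof. exact/red_reduced/reduced_red. Qed.

Lemma pushK x r : reduced r -> push x (push (linv x) r) = r.
Proof.
case: r => [|y r] /= red_r; first by rewrite eqxx.
case: eqP => [|_]; last by rewrite /= eqxx.
rewrite linvK => <-; by case: r red_r => [|z r] //= /andP [/negbTE ->].
Qed.

Lemma push_linvK x r : reduced r -> push (linv x) (push x r) = r.
Proof. by have := @pushK (linv x) r; rewrite linvK. Qed.

(* The action of a word on reduced words by successive pushes: the free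
   group acting on itself by left multiplication. *)
Definition act (u r : word) : word := foldr push r u.

Lemma red_cat u v : red (u ++ v) = act u (red v).
Proof. by elim: u => [|x u IH] //; rewrite cat_cons red_cons IH. Qed.

Lemma reduced_act u r : reduced r -> reduced (act u r).
Proof. by elim: u => [|x u IH] //= red_r; rewrite reduced_push ?IH. Qed.

Lemma act_push x s r :
  reduced s -> reduced r -> act (push x s) r = push x (act s r).
Proof.
case: s => [|y s] //= red_s red_r; case: eqP => [->|_] //=.
by rewrite pushK //; apply: reduced_act => //; case/andP: red_s.
Qed.

Lemma act_red u r : reduced r -> act (red u) r = act u r.
Proof.
by elim: u => [|x u IH] red_r //; rewrite red_cons act_push ?reduced_red ?IH.
Qed.

Lemma red_catr u v : red (u ++ red v) = red (u ++ v).
Proof. by rewrite !red_cat redK. Qed.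

Lemma red_catl u v : red (red u ++ v) = red (u ++ v).
Proof. by rewrite !red_cat act_red // reduced_red. Qed.

Lemma red_flatten_red (ws : seq word) :
  red (flatten (map red ws)) = red (flatten ws).
Proof.
by elim: ws => [|w ws IH] //=; rewrite red_catl -red_catr IH red_catr.
Qed.

Lemma fprod_flatten (ws : seq word) : fprod ws = red (flatten ws).
Proof. by elim: ws => [|w ws IH] //=; rewrite /fmul IH red_catr. Qed.

Lemma fprod_fprod (T : Type) (h : T -> seq word) (s : seq T) :
  fprod [seq fprod (h k) | k <- s] = red (flatten [seq flatten (h k) | k <- s]).
Proof.
have -> : [seq fprod (h k) | k <- s] = map red [seq flatten (h k) | k <- s].
  by rewrite -map_comp; apply: eq_map => k; rewrite fprod_flatten.
by rewrite fprod_flatten red_flatten_red.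
Qed.

Lemma finv_cat u v : finv (u ++ v) = finv v ++ finv u.
Proof. by rewrite /finv map_cat rev_cat. Qed.

Lemma red_finvK u w : red (finv u ++ (u ++ w)) = red w.
Proof.
elim: u w => [|x u IH] w //.
rewrite -cat1s finv_cat -!catA red_cat /= red_cons push_linvK ?reduced_red //.
by rewrite -red_cat IH.
Qed.

Lemma red_rotate u v : red (u ++ v) = [::] -> red (v ++ u) = [::].
Proof.
move=> uv1; rewrite -(red_finvK u (v ++ u)) red_cat catA -red_catl uv1 -red_cat.
by rewrite -{2}(cats0 u) red_finvK.
Qed.

Lemma red_flatten_rot (ws : seq word) i :
  red (flatten (rot i ws)) = [::] -> red (flatten ws) = [::].
Proof.
rewrite /rot flatten_cat => /red_rotate.
by rewrite -flatten_cat cat_take_drop.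
Qed.

Definition signed (s : bool) (w : word) : bool := all (fun x => x.2 == s) w.
Notation positive := (signed false).

Lemma signed_reduced s w : signed s w -> reduced w.
Proof.
elim: w => [|x w IH] //= /andP [/eqP x_s w_s]; rewrite IH // andbT.
case: w w_s {IH} => [|y w] //= /andP [/eqP y_s _].
by apply/eqP=> y_x; move: y_s; rewrite y_x /= x_s; case: (s).
Qed.

Lemma positive_eq u v :
  positive u -> positive v -> red (u ++ finv v) = [::] -> u = v.
Proof.
move=> /signed_reduced/red_reduced u_red /signed_reduced/red_reduced v_red uv1.
rewrite -u_red -v_red.
have vKv : red (finv v ++ v) = [::] by have := red_finvK v [::]; rewrite cats0.
by rewrite -[u]cats0 -vKv red_catr catA -red_catl uv1.
Qed.

Section Projection.
Variable keep : pred gam.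

Definition kept (x : letter) : bool := keep x.1.
Definition proj (w : word) : word := red (filter kept w).

Lemma proj_red w : proj (red w) = proj w.
Proof.
rewrite /proj; elim: w => [|x w IH] //; rewrite red_cons.
have filter_push r : red (filter kept (push x r)) = red (filter kept (x :: r)).
  case: r => [|y r] //=; case: eqP => [->|_] //=; rewrite /kept /=.
  by case: (keep x.1) => //; rewrite !red_cons pushK ?reduced_red.
by rewrite filter_push /=; case: (kept x) => //; rewrite !red_cons IH.
Qed.

Lemma proj_cat u v : proj (u ++ v) = red (proj u ++ proj v).
Proof. by rewrite /proj filter_cat red_catl red_catr. Qed.

Lemma proj_fprod (ws : seq word) : proj (fprod ws) = proj (flatten ws).
Proof. by rewrite fprod_flatten proj_red. Qed.

Lemma proj_trivial w : red w = [::] -> proj w = [::].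
Proof. by rewrite -proj_red => ->. Qed.

Lemma filter_finv w : filter kept (finv w) = finv (filter kept w).
Proof. by rewrite /finv filter_rev filter_map. Qed.

End Projection.

(* The generators a_1 and b_1 of Gamma_1: the projection onto F(Gamma_1)
   sees only the first block W_0, ..., W_3 of the construction. *)
Definition gamma1 (g : gam) : bool := (g.1 < 2) && (g.2 == 1).

Definition code (c : ab) : nat := if c is ab_a then 0 else 1.
Definition enc (p : nat) (w : seq ab) : word :=
  [seq ((code c, p), false) | c <- w].

Lemma positive_enc p w : positive (enc p w).
Proof. by elim: w. Qed.

Lemma enc_inj p : injective (enc p).
Proof. by apply: inj_map => [[] []]. Qed.

Lemma enc_cat p u v : enc p (u ++ v) = enc p u ++ enc p v.
Proof. exact: map_cat. Qed.

Lemma enc_flatten (T : Type) p (g : T -> seq ab) s :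
  flatten [seq enc p (g j) | j <- s] = enc p (flatten (map g s)).
Proof. by elim: s => [|j s IH] //=; rewrite IH enc_cat. Qed.

Lemma filter_enc p w :
  filter (kept gamma1) (enc p w) = if p == 1 then enc p w else [::].
Proof.
case: eqP => [->|/eqP p_ne1]; elim: w => [|c w IH] //=; rewrite IH /kept /gamma1 /=.
  by case: c.
by rewrite (negbTE p_ne1) andbF.
Qed.

Definition aj_b (j : nat) : seq ab := nseq j ab_a ++ [:: ab_b].
Definition b_aj (j : nat) : seq ab := ab_b :: nseq j ab_a.

Lemma delta_enc p w : delta p w = enc p w.
Proof.
rewrite /delta fprod_flatten.
have -> : flatten [seq match c with ab_a => a_ p | ab_b => b_ p end | c <- w]
          = enc p w.
  by elim: w => [|[] w IH] //=; rewrite IH.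
exact/red_reduced/signed_reduced/positive_enc.
Qed.

Lemma flatten_nseq1 (T : Type) (x : T) j : flatten (nseq j [:: x]) = nseq j x.
Proof. by elim: j => [|j IH] //=; rewrite IH. Qed.

Lemma phi_enc p j : phi p j = enc p (aj_b j).
Proof.
rewrite /phi fprod_flatten flatten_cat flatten_nseq1 /=.
have -> : nseq j ((0, p), false) ++ [:: ((1, p), false)] = enc p (aj_b j).
  by rewrite /enc map_cat map_nseq.
exact/red_reduced/signed_reduced/positive_enc.
Qed.

Lemma psi_enc p j : psi p j = finv (enc p (b_aj j)).
Proof.
rewrite /psi fprod_flatten flatten_cat flatten_nseq1 /=.
have -> : nseq j ((0, p), true) ++ [:: ((1, p), true)] = finv (enc p (b_aj j)).
  by rewrite /finv /enc /= map_nseq map_nseq rev_cons rev_nseq cats1.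
apply/red_reduced/(@signed_reduced true).
by rewrite /signed /finv all_rev all_map /=; elim: j.
Qed.

Definition projects_to (w : word * word) (u v : word) : Prop :=
  proj gamma1 w.1 = red u /\ proj gamma1 w.2 = red v.

Lemma projects_to_cat w w' u u' v v' :
  projects_to w u v -> projects_to w' u' v' ->
  projects_to (w.1 ++ w'.1, w.2 ++ w'.2) (u ++ u') (v ++ v').
Proof.
by move=> [w1 w2] [w'1 w'2]; split; rewrite proj_cat ?w1 ?w2 ?w'1 ?w'2 red_catl red_catr.
Qed.

Lemma projects_to_flatten (l : seq (word * word)) (T : eqType) (s : seq T)
    (F1 F2 : T -> word) :
  (forall w, w \in l -> exists2 j, j \in s & projects_to w (F1 j) (F2 j)) ->
  exists2 J, all (mem s) J &
    projects_to (flatten (map fst l), flatten (map snd l))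
                (flatten (map F1 J)) (flatten (map F2 J)).
Proof.
elim: l => [|w l IH] l_proj; first by exists [::].
have [j j_s w_proj] := l_proj w (mem_head _ _).
have [J J_s l_proj'] := IH (fun w' l_w' => l_proj w' (predU1r w' w l_w')).
by exists (j :: J); [rewrite /= j_s J_s | exact: (projects_to_cat w_proj l_proj')].
Qed.

Lemma projects_to_nil (l : seq (word * word)) :
  (forall w, w \in l -> projects_to w [::] [::]) ->
  projects_to (flatten (map fst l), flatten (map snd l)) [::] [::].
Proof.
elim: l => [|w l IH] l_proj; first by split.
exact: (projects_to_cat (l_proj w (mem_head _ _))
          (IH (fun w' l_w' => l_proj w' (predU1r w' w l_w')))).
Qed.

Lemma projects_to_map (T : eqType) (s : seq T) (B : T -> word * word)
    (U V : T -> word) :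
  (forall y, y \in s -> projects_to (B y) (U y) (V y)) ->
  projects_to (flatten [seq (B y).1 | y <- s], flatten [seq (B y).2 | y <- s])
              (flatten (map U s)) (flatten (map V s)).
Proof.
elim: s => [|y s IH] B_proj; first by split.
exact: (projects_to_cat (B_proj y (mem_head _ _))
          (IH (fun y' s_y' => B_proj y' (predU1r y' y s_y')))).
Qed.

Arguments fprod : simpl never.

(* The projections of the pairs of W_0, ..., W_3 onto F(Gamma_1); all other
   W_y project trivially since they only involve x_k and a_p, b_p, p > 1. *)
Section WProjections.
Variable P : seq (seq ab * seq ab).

Ltac compute_projection :=
  rewrite /projects_to /= !proj_fprod /proj /= ?filter_cat ?filter_finv /upj /vpj
          ?delta_enc ?phi_enc ?psi_enc ?filter_finv ?filter_enc /= ?cats0.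

Lemma projects_W0 w : w \in Wset P 0 ->
  projects_to w (finv (enc 1 (pv P 1)) ++ enc 1 (pu P 1)) (enc 1 [:: ab_b]).
Proof. by rewrite /Wset divn_small // add0n /= inE => /eqP ->; compute_projection. Qed.

Lemma projects_W1 w : w \in Wset P 1 ->
  exists2 j, j \in iota 2 (pn P - 2) & projects_to w (enc 1 (pu P j)) (enc 1 (aj_b j)).
Proof.
rewrite /Wset divn_small // add0n /= => /mapP [j j_range ->].
by exists j => //; compute_projection.
Qed.

Lemma projects_W2 w : w \in Wset P 2 ->
  projects_to w (enc 1 (pu P (pn P)) ++ finv (enc 1 (pv P (pn P))))
                (finv (enc 1 [:: ab_b])).
Proof. by rewrite /Wset divn_small // add0n /= inE => /eqP ->; compute_projection. Qed.

Lemma projects_W3 w : w \in Wset P 3 ->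
  exists2 j, j \in iota 2 (pn P - 2) &
    projects_to w (finv (enc 1 (pv P j))) (finv (enc 1 (b_aj j))).
Proof.
rewrite /Wset divn_small // add0n /= => /mapP [j j_range ->].
by exists j => //; compute_projection.
Qed.

Lemma projects_W_high y w :
  4 <= y < 16 -> w \in Wset P y -> projects_to w [::] [::].
Proof.
move=> y_range; have p_ne1 : (y %/ 4 + 1 == 1) = false.
  by rewrite addn1 eqSS; apply/negbTE; rewrite -lt0n divn_gt0 //; case/andP: y_range.
rewrite /Wset; move: p_ne1; move: (y %/ 4 + 1) => p p_ne1.
case: (y %% 4) => [|[|[|r]]]; rewrite ?inE;
  [move/eqP ->|case/mapP => j _ ->|move/eqP ->|case/mapP => j _ ->];
  by compute_projection; rewrite p_ne1 /kept /gamma1 /= ?p_ne1.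
Qed.

End WProjections.

Lemma map_mod_iota n i :
  i < n -> [seq (i + k) %% n | k <- iota 0 n] = rot i (iota 0 n).
Proof.
move=> lt_in; rewrite /rot drop_iota take_iota (minn_idPl (ltnW lt_in)) add0n.
have -> : iota 0 n = iota 0 (n - i) ++ iota (n - i) i.
  by rewrite -{1}(subnK (ltnW lt_in)) iotaD.
rewrite map_cat; congr (_ ++ _).
  have -> : iota i (n - i) = [seq i + k | k <- iota 0 (n - i)].
    by rewrite -iotaDl addn0.
  apply/eq_in_map => k.
  by rewrite mem_iota add0n => /andP [_ k_lt]; rewrite modn_small //; lia.
have -> : iota (n - i) i = [seq n - i + k | k <- iota 0 i] by rewrite -iotaDl addn0.
rewrite -map_comp -[RHS]map_id.
apply/eq_in_map => k; rewrite mem_iota add0n => /andP [_ k_lt] /=.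
by rewrite addnA subnKC ?(ltnW lt_in) // modnDl modn_small //; lia.
Qed.

Lemma fprod_cycle_trivial n i (h : nat -> seq word) : i < n ->
  fprod [seq fprod (h ((i + k) %% n)) | k <- iota 0 n] = [::] ->
  red (flatten [seq flatten (h k) | k <- iota 0 n]) = [::].
Proof.
move=> lt_in; rewrite fprod_fprod => cycle1; apply: (@red_flatten_rot _ i).
by rewrite -map_rot -map_mod_iota // -map_comp.
Qed.

Definition cycle_word (c : word * word -> word)
    (ws : nat -> seq (word * word)) : word :=
  flatten [seq flatten (map c (ws k)) | k <- iota 0 16].

Lemma cycle_word_trivial (i : nat) (ws : nat -> seq (word * word)) : i < 16 ->
  pairprod [seq pairprod (ws ((i + k) %% 16)) | k <- iota 0 16] = ([::], [::]) ->
  red (cycle_word fst ws) = [::] /\ red (cycle_word snd ws) = [::].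
Proof.
move=> i16 cycle1; split; apply: (fprod_cycle_trivial i16).
  exact: (congr1 fst cycle1).
exact: (congr1 snd cycle1).
Qed.

Lemma nseq_a_b_inj j k (s t : seq ab) :
  nseq j ab_a ++ ab_b :: s = nseq k ab_a ++ ab_b :: t -> j = k /\ s = t.
Proof. by elim: j k => [|j IH] [|k] //= [] // /IH [-> ->]. Qed.

Lemma aj_b_code_inj : injective (fun J => flatten (map aj_b J)).
Proof.
elim=> [|j J IH] [|k K] //=; rewrite /aj_b; first by case: k.
  by case: j.
by rewrite -!catA /= => /nseq_a_b_inj [-> /IH ->].
Qed.

Lemma b_shift (J : seq nat) :
  ab_b :: flatten (map aj_b J) = flatten (map b_aj J) ++ [:: ab_b].
Proof. by elim: J => [|j J IH] //=; rewrite /aj_b /b_aj -!catA -IH. Qed.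

Lemma finv_flatten (T : Type) (g : T -> word) s :
  flatten [seq finv (g j) | j <- s] = finv (flatten (map g (rev s))).
Proof.
by elim: s => [|j s IH] //=; rewrite rev_cons map_rcons flatten_rcons finv_cat IH.
Qed.

(* The images in F(Gamma_1) of the two components of a cycle in which the
   factors of W_1 use the indices J1 and those of W_3 the indices J3. *)
Definition top_word (P : seq (seq ab * seq ab)) (J1 J3 : seq nat) : word :=
  finv (enc 1 (pv P 1)) ++ enc 1 (pu P 1) ++
  flatten [seq enc 1 (pu P j) | j <- J1] ++
  enc 1 (pu P (pn P)) ++ finv (enc 1 (pv P (pn P))) ++
  flatten [seq finv (enc 1 (pv P j)) | j <- J3].

Definition bottom_word (J1 J3 : seq nat) : word :=
  enc 1 [:: ab_b] ++ flatten [seq enc 1 (aj_b j) | j <- J1] ++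
  finv (enc 1 [:: ab_b]) ++ flatten [seq finv (enc 1 (b_aj j)) | j <- J3].

Lemma bottom_word_trivial J1 J3 : red (bottom_word J1 J3) = [::] -> J3 = rev J1.
Proof.
rewrite /bottom_word enc_flatten catA -enc_cat finv_flatten enc_flatten.
rewrite -finv_cat -enc_cat cat1s b_shift.
move=> /(positive_eq (positive_enc _ _) (positive_enc _ _)) /enc_inj.
by rewrite -!b_shift => [[/aj_b_code_inj ->]]; rewrite revK.
Qed.

Lemma top_word_trivial P J :
  red (top_word P J (rev J)) = [::] ->
  pu P 1 ++ flatten (map (pu P) J) ++ pu P (pn P) =
  pv P 1 ++ flatten (map (pv P) J) ++ pv P (pn P).
Proof.
move/red_rotate; rewrite finv_flatten revK !enc_flatten => trivial_rot.
apply: (@enc_inj 1); apply: (positive_eq (positive_enc _ _) (positive_enc _ _)).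
by rewrite -trivial_rot !enc_cat !finv_cat -!catA.
Qed.

Lemma seq1_of_size1 (T : Type) (l : seq T) : size l = 1 -> exists x, l = [:: x].
Proof. by case: l => [|x [|]] // _; exists x. Qed.

Lemma cycle_projection P (ws : nat -> seq (word * word)) :
  (forall y, y < 16 -> all (fun w => w \in Wset P y) (ws y) /\
                       (~~ odd y -> size (ws y) = 1)) ->
  exists J1 J3, all (mem (iota 2 (pn P - 2))) J1 /\
    projects_to (cycle_word fst ws, cycle_word snd ws)
                (top_word P J1 J3) (bottom_word J1 J3).
Proof.
move=> ws_W; have in_W y w : y < 16 -> w \in ws y -> w \in Wset P y.
  by move=> y16; apply/allP; case: (ws_W y y16).
have [w0 ws0] := seq1_of_size1 ((ws_W 0 erefl).2 erefl).
have [w2 ws2] := seq1_of_size1 ((ws_W 2 erefl).2 erefl).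
have [J1 J1_range ws1] :=
  projects_to_flatten (fun w ws1_w => projects_W1 (in_W 1 w erefl ws1_w)).
have [J3 _ ws3] :=
  projects_to_flatten (fun w ws3_w => projects_W3 (in_W 3 w erefl ws3_w)).
exists J1, J3; split => //.
pose B y := (flatten (map fst (ws y)), flatten (map snd (ws y))).
pose U y := match y with
  | 0 => finv (enc 1 (pv P 1)) ++ enc 1 (pu P 1)
  | 1 => flatten [seq enc 1 (pu P j) | j <- J1]
  | 2 => enc 1 (pu P (pn P)) ++ finv (enc 1 (pv P (pn P)))
  | 3 => flatten [seq finv (enc 1 (pv P j)) | j <- J3]
  | _ => [::] end.
pose V y := match y with
  | 0 => enc 1 [:: ab_b]
  | 1 => flatten [seq enc 1 (aj_b j) | j <- J1]
  | 2 => finv (enc 1 [:: ab_b])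
  | 3 => flatten [seq finv (enc 1 (b_aj j)) | j <- J3]
  | _ => [::] end.
have <- : flatten (map U (iota 0 16)) = top_word P J1 J3.
  by rewrite /top_word /= !cats0 -!catA.
have <- : flatten (map V (iota 0 16)) = bottom_word J1 J3.
  by rewrite /bottom_word /= !cats0.
apply: (projects_to_map (B := B)) => y; rewrite mem_iota => /andP [_ y16].
case: y y16 => [|[|[|[|y]]]] y16.
- have w0_W : w0 \in Wset P 0 by rewrite (in_W 0) // ws0 mem_head.
  by have := projects_W0 w0_W; rewrite /B ws0 /= !cats0.
- exact: ws1.
- have w2_W : w2 \in Wset P 2 by rewrite (in_W 2) // ws2 mem_head.
  by have := projects_W2 w2_W; rewrite /B ws2 /= !cats0.
- exact: ws3.
- by apply/projects_to_nil => w /(in_W _ _ y16); apply: projects_W_high.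
Qed.

Lemma iota_admissible n j :
  3 <= n -> j \in iota 2 (n - 2) -> (2 <= j) && (j <= n - 1).
Proof. by rewrite mem_iota; lia. Qed.

Theorem mainTheorem2 (P : seq (seq ab * seq ab)) :
  3 <= size P ->
  (forall l : seq nat, ~ rpcp_solution P l) ->
  forall Q : word * word, is_cycle P Q -> Q <> ([::], [::]).
Proof.
move=> P3 no_solution _ [i [ws [i16 [ws_W ->]]]] /(cycle_word_trivial i16) [top1 bot1].
have [J1 [J3 [J1_range [topE botE]]]] := cycle_projection ws_W.
have J3E : J3 = rev J1 by apply: bottom_word_trivial; rewrite -botE proj_trivial.
apply: (no_solution J1); split.
  by apply/allP => j /(allP J1_range); apply: iota_admissible.
by apply: top_word_trivial; rewrite -J3E -topE proj_trivial.
Qed.
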